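(* Let $a,b$ be positive integers with $\gcd(a,b)=1$ such that $(\mathbb{Z}/(a^2+b^2)\mathbb{Z})^{\times}$ is cyclic, let $n_1$ be a positive integer and let $m$ be a positive integer such that $(a^2+b^2)n_1-m^4=u^2+(a^2+b^2)z^2+(a^2+b^2)w^2$ for some $u\in\mathbb{Z}$, $z,w\in\mathbb{N}$. Assume moreover that $\gcd(m,p)=1$ for every odd prime $p$ dividing $a^2+b^2$, and that if $\gcd(m,a^2+b^2)>1$ then $2\nmid ab$ and $\gcd(m,a^2+b^2)=2$. Then there exist $x,y\in\mathbb{Z}$ with $$x^2+y^2+z^2+w^2=n_1\quad\text{and}\quad ax+by=m^2.$$ If in addition $m^2\ge \sqrt{b^2 n_1}$ and $a\le b$, then $x,y\ge 0$.
   Context: $\mathbb{N}=\{0,1,2,\dots\}$. *)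

From mathcomp Require Import all_boot all_order all_algebra all_fingroup all_solvable all_field.
Set Implicit Arguments. Unset Strict Implicit. Unset Printing Implicit Defensive.

(* Let N = a^2 + b^2.  Modulo N we have a^2 = -b^2 and m^4 = -u^2, hence
   (a m^2)^2 = (b u)^2.  As the unit group of Z/NZ is cyclic, 1 and -1 are the
   only square roots of 1 there, so a m^2 = s b u (mod N) with s = 1 or -1;
   when gcd(m, N) = 2 both sides are first shifted by N/2, which makes them
   units without changing their squares.  Then x = (a m^2 - s b u)/N and
   y = (b m^2 + s a u)/N are integers with a x + b y = m^2 and, by the
   two-square identity, N (x^2 + y^2) = m^4 + u^2, which is the four-square
   equation.  For the sign condition: on the line a x + b y = m^2 with a <= b,
   a negative coordinate forces the other one beyond m^2/b >= sqrt n1. *)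

From mathcomp Require Import all_boot all_order all_algebra all_fingroup all_solvable all_field.
Import Order.TTheory GRing.Theory Num.Theory.
From mathcomp Require Import zify ring lra.
Set Implicit Arguments. Unset Strict Implicit. Unset Printing Implicit Defensive.

Lemma coprime_sqrDl (a b : nat) : coprime a b -> coprime (a ^ 2 + b ^ 2) a.
Proof. by move=> cop_ab; rewrite /coprime gcdnC -{1}mulnn gcdnMDl; apply: coprimeXr. Qed.

Lemma prime_dvd_sqrD (p x y : nat) :
  prime p -> p %| x ^ 2 + y ^ 2 -> p %| x -> p %| y.
Proof.
by move=> p_pr + dvd_x; rewrite dvdn_addr !Euclid_dvdX ?dvd_x // andbT.
Qed.

Lemma coprime_by_primes (m n : nat) :
  (forall p, prime p -> p %| m -> p %| n -> False) -> coprime m n.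
Proof.
move=> no_common; rewrite /coprime; case: ltngtP => [|g_gt1|//].
  rewrite ltnS leqn0 -[_ == 0]negbK -lt0n gcdn_gt0 negb_or -!eqn0Ngt.
  by case/andP=> /eqP m0 /eqP n0; case: (no_common 2); rewrite ?m0 ?n0.
case: (no_common _ (pdiv_prime g_gt1)); apply: dvdn_trans (pdiv_dvd _) _.
  exact: dvdn_gcdl.
exact: dvdn_gcdr.
Qed.

Lemma sqrD_odd_double (a b : nat) :
  odd a -> odd b -> exists2 k, a ^ 2 + b ^ 2 = k * 2 & odd k.
Proof.
move=> odd_a odd_b; have := odd_double_half a; have := odd_double_half b.
rewrite odd_a odd_b; move: a./2 b./2 => i j <- <-.
exists (2 * (i * i + i + j * j + j)).+1; last by rewrite /= oddM.
rewrite -!muln2 /=; nia.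
Qed.

Lemma exists_coprime_shift (a b m U : nat) :
  0 < m -> coprime a b ->
  a ^ 2 + b ^ 2 %| (m ^ 2) ^ 2 + U ^ 2 ->
  (forall p, prime p -> odd p -> p %| a ^ 2 + b ^ 2 -> coprime m p) ->
  (1 < gcdn m (a ^ 2 + b ^ 2) -> odd (a * b) /\ gcdn m (a ^ 2 + b ^ 2) = 2) ->
  exists2 h, a ^ 2 + b ^ 2 %| h * 2 & coprime (a ^ 2 + b ^ 2) (b * U + h).
Proof.
set N := a ^ 2 + b ^ 2 => m_gt0 cop_ab dvdN odd_cop gcd_gt1.
have cop_Nb : coprime N b by rewrite /N addnC coprime_sqrDl // coprime_sym.
have ndvd_b p : prime p -> p %| N -> ~~ (p %| b).
  by move=> p_pr pN; rewrite -prime_coprime // (coprime_dvdl pN cop_Nb).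
have dvd_m p : prime p -> p %| N -> p %| U -> p %| m.
  move=> p_pr pN pU; have : p %| m ^ 2.
    by apply: prime_dvd_sqrD p_pr _ pU; rewrite addnC (dvdn_trans pN dvdN).
  by rewrite Euclid_dvdX // andbT.
have [cop_mN | ncop_mN] := boolP (coprime m N).
  exists 0; first by rewrite dvdn0.
  apply: coprime_by_primes => p p_pr pN.
  rewrite addn0 Euclid_dvdM // (negPf (ndvd_b _ p_pr pN)) /= => pU.
  by have := coprime_dvdr pN cop_mN; rewrite coprime_sym prime_coprime // dvd_m.
have [odd_ab gcd_eq2] : odd (a * b) /\ gcdn m N = 2.
  by apply: gcd_gt1; rewrite ltn_neqAle eq_sym ncop_mN gcdn_gt0 m_gt0.
have [k eNk odd_k] : exists2 k, N = k * 2 & odd k.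
  by move: odd_ab; rewrite oddM => /andP[]; apply: sqrD_odd_double.
exists k; first by rewrite eNk.
have even_U : 2 %| U.
  apply: (prime_dvd_sqrD (x := m ^ 2)) => //.
    by rewrite (dvdn_trans _ dvdN) // eNk dvdn_mull.
  by rewrite Euclid_dvdX // andbT -gcd_eq2 dvdn_gcdl.
apply: coprime_by_primes => p p_pr pN.
case: (even_prime p_pr) => [p2 | odd_p].
  by rewrite p2 dvdn_addr ?dvdn_mull // dvdn2 odd_k.
have pk : p %| k by rewrite -(@Gauss_dvdl _ _ 2) ?coprimen2 // -eNk.
rewrite dvdn_addl // Euclid_dvdM // (negPf (ndvd_b _ p_pr pN)) /= => pU.
by have := odd_cop p p_pr odd_p pN; rewrite coprime_sym prime_coprime // dvd_m.
Qed.

Local Open Scope ring_scope.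

Section CyclicUnits.
Variable R : finComUnitRingType.
Hypothesis cyclic_units : cyclic [set: {unit R}].
Hypothesis opp1_neq1 : (-1 : R) != 1.

(* A cyclic group has at most one element of order 2, and here -1 is one. *)
Lemma sqrr_eq1_cyclic (x : R) : x ^+ 2 = 1 -> x = 1 \/ x = -1.
Proof.
move=> x2; have xU : x \is a GRing.unit by apply/unitrP; exists x; rewrite -expr2 x2.
have order2 (v : {unit R}) : val v ^+ 2 = 1 -> v != 1%g -> #[v]%g = 2%N.
  move=> v2 v1; have : (#[v]%g %| 2)%N.
    by rewrite order_dvdn; apply/eqP/val_inj; rewrite FinRing.val_unitX v2.
  by rewrite dvdn_divisors // !inE order_eq1 (negPf v1) => /orP[] /eqP.
pose ux : {unit R} := Sub x xU; pose um : {unit R} := Sub (-1) (unitrN1 _).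
have [->|x1] := eqVneq x 1; first by left.
have ox : #[ux]%g = 2%N by apply: order2 => //; apply: contra_neq x1 => /(congr1 val).
have om : #[um]%g = 2%N.
  by apply: order2; [rewrite /= sqrrN expr1n | apply: contra_neq opp1_neq1 => /(congr1 val)].
have : ux \in <[um]>%g.
  rewrite -(eqP (_ : <[ux]> == <[um]>)%g) ?cycle_id //.
  by rewrite (eq_subG_cyclic cyclic_units) ?subsetT // -!/(order _) ox om.
case/cycleP=> k /(congr1 val) /=; rewrite FinRing.val_unitX /= -signr_odd.
by case: (odd k) => ->; [right | left].
Qed.

Lemma sqrr_eq_shift (h c d : R) :
  h *+ 2 = 0 -> c + h \is a GRing.unit -> d ^+ 2 = c ^+ 2 -> d = c \/ d = - c.
Proof.
move=> h2 chU dc.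
have sqr_shift (x : R) : (x + h) ^+ 2 = x ^+ 2 + h ^+ 2.
  by rewrite sqrrD -mulrnAr h2 mulr0 addr0.
have : ((d + h) / (c + h)) ^+ 2 = 1.
  by rewrite exprMn exprVn !sqr_shift dc -sqr_shift mulrV // unitrX.
case/sqrr_eq1_cyclic => /(canRL (divrK chU)); rewrite ?mul1r ?mulN1r.
- by move/addIr; left.
- move/(canRL (addrK h)) => ->; right.
  by rewrite opprD -addrA -opprD -mulr2n h2 oppr0 addr0.
Qed.
End CyclicUnits.

Lemma Zp_natr_eq0 (N k : nat) : (1 < N)%N -> ((k%:R : 'Z_N) == 0) = (N %| k)%N.
Proof. by move=> N_gt1; rewrite -val_eqE /= val_Zp_nat. Qed.

Lemma Zp_intr_eq0 (N : nat) (z : int) : (1 < N)%N -> (z%:~R : 'Z_N) = 0 -> (N%:Z %| z)%Z.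
Proof.
move=> N_gt1 z0; rewrite dvdzE -(Zp_natr_eq0 _ N_gt1).
case: z z0 => n; rewrite ?NegzE ?mulrNz -?pmulrn; first by move=> ->.
by move/eqP; rewrite oppr_eq0 abszN.
Qed.

Lemma Zp_sqr_eq_shift (N : nat) (h c d : 'Z_N) :
  (1 < N)%N -> cyclic (units_Zp N) ->
  h *+ 2 = 0 -> c + h \is a GRing.unit -> d ^+ 2 = c ^+ 2 -> d = c \/ d = - c.
Proof.
move=> N_gt1 cycN; have [opp1|opp1] := eqVneq (-1 : 'Z_N) 1; last first.
  exact: (sqrr_eq_shift cycN opp1).
(* -1 = 1 forces N = 2, where squaring is the identity. *)
have N2 : N = 2.
  apply/eqP; rewrite eqn_leq N_gt1 andbT dvdn_leq //.
  by rewrite -(Zp_natr_eq0 _ N_gt1) mulr2n -{1}opp1 addNr.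
move: c d h; rewrite N2 => c d h _ _.
by case: c d => [[|[|//]] ?] [[|[|//]] ?] /(congr1 val) //=; left; apply: val_inj.
Qed.

Lemma sign_congruence (a b M U h : nat) :
  (1 < a ^ 2 + b ^ 2)%N -> cyclic (units_Zp (a ^ 2 + b ^ 2)) ->
  (a ^ 2 + b ^ 2 %| M ^ 2 + U ^ 2)%N -> (a ^ 2 + b ^ 2 %| h * 2)%N ->
  coprime (a ^ 2 + b ^ 2) (b * U + h) ->
  exists2 s : int, s ^+ 2 = 1 & ((a ^ 2 + b ^ 2)%N%:Z %| a%:Z * M%:Z - s * b%:Z * U%:Z)%Z.
Proof.
set N := (a ^ 2 + b ^ 2)%N => N_gt1 cycN dvdN_MU dvdN_h cop.
pose r (k : nat) : 'Z_N := k%:R.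
have sqr_opp x y : (N %| x ^ 2 + y ^ 2)%N -> r x ^+ 2 = - r y ^+ 2.
  by rewrite -(Zp_natr_eq0 _ N_gt1) natrD !natrX addr_eq0 => /eqP.
have h2 : r h *+ 2 = 0 by apply/eqP; rewrite -mulr_natr -natrM Zp_natr_eq0.
have unit_bU : r b * r U + r h \is a GRing.unit by rewrite -natrM -natrD unitZpE.
have sqr_eq : (r a * r M) ^+ 2 = (r b * r U) ^+ 2.
  by rewrite !exprMn (sqr_opp a b) ?dvdnn // (sqr_opp M U) // mulrNN.
have [e|e] := Zp_sqr_eq_shift N_gt1 cycN h2 unit_bU sqr_eq; [exists 1 | exists (-1)] => //;
  by apply: (Zp_intr_eq0 N_gt1); rewrite intrB !intrM -!pmulrn [_ * M%:R]e; ring.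
Qed.

Lemma dvd_sqrD_line (a b M U s : int) :
  0 < a -> coprimez (a ^+ 2 + b ^+ 2) a -> s ^+ 2 = 1 ->
  (a ^+ 2 + b ^+ 2 %| a * M - s * b * U)%Z ->
  exists x y : int,
    (a ^+ 2 + b ^+ 2) * (x ^+ 2 + y ^+ 2) = M ^+ 2 + U ^+ 2 /\ a * x + b * y = M.
Proof.
set N := a ^+ 2 + b ^+ 2 => a_gt0 copNa s2 dvdX.
set X := a * M - s * b * U; pose Y := b * M + s * a * U.
have N_neq0 : N != 0 by rewrite lt0r_neq0 // ltr_pwDl ?sqr_ge0 ?exprn_gt0.
have dvdY : (N %| Y)%Z.
  rewrite -(Gauss_dvdzr _ copNa) (_ : a * Y = b * X + s * U * N); last by rewrite /X /Y /N; ring.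
  by rewrite rpredD ?dvdz_mull // dvdz_mulr.
exists (X %/ N)%Z, (Y %/ N)%Z.
have [eX eY] : X = N * (X %/ N)%Z /\ Y = N * (Y %/ N)%Z by rewrite !(mulrC N) !divzK.
split; apply: (mulfI N_neq0).
- rewrite mulrA -expr2 mulrDr -!exprMn -eX -eY /X /Y /N.
  transitivity ((a ^+ 2 + b ^+ 2) * (M ^+ 2 + s ^+ 2 * U ^+ 2)); first by ring.
  by rewrite s2 mul1r.
- by rewrite mulrDr ![N * (_ * _)]mulrCA -eX -eY /X /Y /N; ring.
Qed.

Lemma line_disk_nonneg (R : realDomainType) (a b P n x y : R) :
  0 < a -> a <= b -> 0 <= P -> b ^+ 2 * n <= P ^+ 2 ->
  a * x + b * y = P -> x ^+ 2 + y ^+ 2 <= n -> 0 <= x /\ 0 <= y.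
Proof.
move=> a_gt0 le_ab P_ge0 le_n_P line disk.
have b_gt0 : 0 < b by apply: lt_le_trans le_ab.
have [x2 y2] : 0 <= x ^+ 2 /\ 0 <= y ^+ 2 by rewrite !sqr_ge0.
have no_large_coord (t : R) : P < b * t -> t ^+ 2 <= n -> False.
  move=> lt_P_bt le_t_n.
  have : P ^+ 2 < (b * t) ^+ 2 by rewrite ltr_pXn2r // ?nnegrE; lra.
  have : b ^+ 2 * t ^+ 2 <= b ^+ 2 * n by rewrite ler_wpM2l ?sqr_ge0.
  rewrite exprMn; lra.
split; rewrite leNgt; apply/negP => lt0.
- by apply: (no_large_coord y); [rewrite -line; nra | lra].
- have x_gt0 : 0 < x by nra.
  by apply: (no_large_coord x); [nra | lra].
Qed.

Lemma sqrtC_le_natr (k n : nat) : (sqrtC (k%:R : algC) <= n%:R) = (k <= n ^ 2)%N.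
Proof.
by rewrite -(ler_pXn2r (isT : (0 < 2)%N)) ?nnegrE ?ler0n ?sqrtC_ge0 // sqrtCK -natrX ler_nat.
Qed.

Lemma PoszX (n k : nat) : (n ^ k)%N%:Z = n%:Z ^+ k.
Proof. by rewrite -!natz natrX. Qed.

Local Close Scope ring_scope.

Theorem mainTheorem6 (a b n1 m z w : nat) (u : int) :
  0 < a -> 0 < b -> coprime a b ->
  cyclic (units_Zp (a ^ 2 + b ^ 2)) ->
  0 < n1 -> 0 < m ->
  ((a ^ 2 + b ^ 2)%:Z * n1%:Z - (m ^ 4)%:Z
     = u ^+ 2 + (a ^ 2 + b ^ 2)%:Z * (z ^ 2)%:Z + (a ^ 2 + b ^ 2)%:Z * (w ^ 2)%:Z)%R ->
  (forall p : nat, prime p -> odd p -> p %| a ^ 2 + b ^ 2 -> coprime m p) ->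
  (1 < gcdn m (a ^ 2 + b ^ 2) -> odd (a * b) /\ gcdn m (a ^ 2 + b ^ 2) = 2) ->
  exists x y : int,
    (x ^+ 2 + y ^+ 2 + (z ^ 2)%:Z + (w ^ 2)%:Z = n1%:Z)%R /\
    (a%:Z * x + b%:Z * y = (m ^ 2)%:Z)%R /\
    ((sqrtC ((b ^ 2 * n1)%:R : algC) <= (m ^ 2)%:R)%R -> a <= b ->
       (0 <= x)%R /\ (0 <= y)%R).
Proof.
set N := (a ^ 2 + b ^ 2)%N => a_gt0 b_gt0 cop_ab cycN _ m_gt0 eq_n1 odd_cop gcd_gt1.
have N_gt1 : (1 < N)%N by rewrite (@leq_add 1 1) // expn_gt0 ?a_gt0 ?b_gt0.
have Nz : (N%:Z = a%:Z ^+ 2 + b%:Z ^+ 2)%R by rewrite PoszD !PoszX.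
pose U := `|u|%N.
have eq_MU : (((m ^ 2) ^ 2 + U ^ 2)%N%:Z = N%:Z * (n1%:Z - (z ^ 2)%:Z - (w ^ 2)%:Z))%R.
  move/eqP: eq_n1; rewrite subr_eq !PoszX => /eqP eq_n1.
  by rewrite PoszD !PoszX /U abszE real_normK ?num_real // !mulrBr eq_n1; ring.
have dvdN : (N%:Z %| ((m ^ 2) ^ 2 + U ^ 2)%N%:Z)%Z by rewrite eq_MU dvdz_mulr.
have [h dvd_h cop_h] := exists_coprime_shift m_gt0 cop_ab dvdN odd_cop gcd_gt1.
have [s s2] := sign_congruence N_gt1 cycN dvdN dvd_h cop_h.
rewrite Nz => dvd_s.
have copNa : coprimez (a%:Z ^+ 2 + b%:Z ^+ 2) a%:Z by rewrite -Nz; apply: coprime_sqrDl.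
have a_gt0z : (0 < a%:Z)%R by rewrite ltz_nat.
have [x [y [circle line]]] := dvd_sqrD_line a_gt0z copNa s2 dvd_s.
have sum_sqr : (x ^+ 2 + y ^+ 2 + (z ^ 2)%:Z + (w ^ 2)%:Z = n1%:Z)%R.
  have N_neq0 : (N%:Z != 0)%R by rewrite eqz_nat -lt0n ltnW.
  suff : (x ^+ 2 + y ^+ 2 = n1%:Z - (z ^ 2)%:Z - (w ^ 2)%:Z)%R by move->; ring.
  by apply: (mulfI N_neq0); rewrite -eq_MU PoszD !PoszX Nz circle.
exists x, y; split=> //; split=> // le_sqrt le_ab.
apply: (line_disk_nonneg (n := n1%:Z) _ _ _ _ line); rewrite ?ltz_nat ?lez_nat //.
- by move: le_sqrt; rewrite sqrtC_le_natr -lez_nat PoszM !PoszX -exprM.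
- by rewrite -sum_sqr -addrA lerDl addr_ge0.
Qed.
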